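(* A category $S$ is left cancellative (resp., right cancellative) if and only if its universal monoid $\mathrm{U_{mon}}(S)$ is left cancellative (resp., right cancellative). Moreover, $S$ is a groupoid if and only if $\mathrm{U_{mon}}(S)$ is a group.
   Context: Categories are arrow-only: a set $S$ with partial associative multiplication, identities $\mathrm{Id}\,S$, source/target identities. $S$ is left (right) cancellative if $ax=ay\Rightarrow x=y$ (resp. $xa=ya\Rightarrow x=y$) for all $a,x,y$; a groupoid is a category in which every element has a two-sided inverse. $\mathrm{U_{mon}}(S)$ is the monoid presented by generators $\varepsilon_S(x)$ ($x\in S$) and relations $\varepsilon_S(e)=1$ ($e\in\mathrm{Id}\,S$), $\varepsilon_S(x)\varepsilon_S(y)=\varepsilon_S(xy)$ whenever $xy$ is defined. *)

From Stdlib Require Import List.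
Import ListNotations.
Set Implicit Arguments.

(** Arrow-only categories.  [mul x y = Some z] means "xy is defined and
    equals z".  [src x] / [tgt x] are the source / target identities of x;
    xy is defined iff tgt x = src y. *)
Record category := Category {
  arr :> Type;
  mul : arr -> arr -> option arr;
  src : arr -> arr;
  tgt : arr -> arr;
  src_src : forall x, src (src x) = src x;
  tgt_src : forall x, tgt (src x) = src x;
  src_tgt : forall x, src (tgt x) = tgt x;
  tgt_tgt : forall x, tgt (tgt x) = tgt x;
  mul_defined : forall x y, (exists z, mul x y = Some z) <-> tgt x = src y;
  mul_src_tgt : forall x y z, mul x y = Some z -> src z = src x /\ tgt z = tgt y;
  mul_src_l : forall x, mul (src x) x = Some x;
  mul_tgt_r : forall x, mul x (tgt x) = Some x;
  mul_assoc : forall x y z xy yz, mul x y = Some xy -> mul y z = Some yz ->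
                mul xy z = mul x yz
}.
Arguments mul {c}.
Arguments src {c}.
Arguments tgt {c}.

Definition is_id (S : category) (e : S) : Prop := src e = e.
Arguments is_id {S}.

Definition left_cancellative (S : category) : Prop :=
  forall a x y z : S, mul a x = Some z -> mul a y = Some z -> x = y.

Definition right_cancellative (S : category) : Prop :=
  forall a x y z : S, mul x a = Some z -> mul y a = Some z -> x = y.

Definition groupoid (S : category) : Prop :=
  forall x : S, exists y e f : S,
    mul x y = Some e /\ is_id e /\ mul y x = Some f /\ is_id f.

(** The universal monoid U_mon(S), presented by generators eps(x) (x in S)
    and relations eps(e) = 1 (e in Id S), eps(x) eps(y) = eps(xy).
    Realised as the free monoid (list S, ++, []) modulo the congruence
    [umon_eq] generated by these relations; eps(x) is [x]. *)
Inductive umon_eq {S : category} : list S -> list S -> Prop :=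
  | ue_refl : forall u, umon_eq u u
  | ue_sym : forall u v, umon_eq u v -> umon_eq v u
  | ue_trans : forall u v w, umon_eq u v -> umon_eq v w -> umon_eq u w
  | ue_ctx : forall a b u v, umon_eq u v -> umon_eq (a ++ u ++ b) (a ++ v ++ b)
  | ue_id : forall e, is_id e -> umon_eq [e] []
  | ue_mul : forall x y z, mul x y = Some z -> umon_eq [x; y] [z].

Definition umon_left_cancellative (S : category) : Prop :=
  forall u v w : list S, umon_eq (u ++ v) (u ++ w) -> umon_eq v w.

Definition umon_right_cancellative (S : category) : Prop :=
  forall u v w : list S, umon_eq (v ++ u) (w ++ u) -> umon_eq v w.

Definition umon_group (S : category) : Prop :=
  forall u : list S, exists v : list S,
    umon_eq (u ++ v) [] /\ umon_eq (v ++ u) [].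

(** Every element of [U_mon(S)] has a unique reduced representative: a word
    of non-identity arrows no two adjacent of which are composable.  Indeed [S]
    acts on reduced words by multiplying an arrow into the front of the word,
    and this action respects the defining relations, so the reduced word of
    [u] is the image of the empty word under [u].  The action of a single arrow
    [a] is injective when [a] is left cancellable, which transfers left
    cancellation; right cancellation follows by passing to the opposite
    category, which reverses words.  If [eps(x)] is invertible, the normal form
    of [eps(x) v = 1] forces [x] to compose with the first letter of the
    reduced form of [v] to an identity, giving a right inverse in [S]; a left
    inverse comes from the opposite category, and the two agree. *)

From Stdlib Require Import List ClassicalEpsilon.
Import ListNotations.

Section Category.

Variable S : category.
Implicit Types (a e x y z t : S) (u v w : list S).

Lemma tgt_is_id e : is_id e -> tgt e = e.
Proof. unfold is_id; intros He; rewrite <- He at 1; rewrite tgt_src; exact He. Qed.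

Lemma is_id_of_tgt e : tgt e = e -> is_id e.
Proof. unfold is_id; intros He; rewrite <- He at 1; rewrite src_tgt; exact He. Qed.

Lemma mul_tgt_src {x y z} : mul x y = Some z -> tgt x = src y.
Proof. intros H; apply mul_defined; eauto. Qed.

Lemma mul_None x y : mul x y = None <-> tgt x <> src y.
Proof.
  split.
  - intros Hn Hxy; apply mul_defined in Hxy as [z Hz]; congruence.
  - intros Hxy; destruct (mul x y) eqn:E; [|reflexivity].
    exfalso; apply Hxy, (mul_tgt_src E).
Qed.

Lemma mul_is_id_l {e y z} : is_id e -> mul e y = Some z -> z = y.
Proof.
  intros He Hz; pose proof (mul_tgt_src Hz) as Hey.
  rewrite tgt_is_id in Hey by exact He; subst e.
  rewrite mul_src_l in Hz; congruence.
Qed.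

Lemma mul_is_id_r {x e z} : is_id e -> mul x e = Some z -> z = x.
Proof.
  intros He Hz; pose proof (mul_tgt_src Hz) as Hxe.
  unfold is_id in He; rewrite He in Hxe; subst e.
  rewrite mul_tgt_r in Hz; congruence.
Qed.

Lemma mul_tgt_id {x e} : is_id e -> tgt x = e -> mul x e = Some x.
Proof. intros _ <-; apply mul_tgt_r. Qed.

Lemma mul_is_id_ends {x y e} : mul x y = Some e -> is_id e -> src x = e /\ tgt y = e.
Proof.
  intros Hxy He; destruct (mul_src_tgt _ _ _ Hxy) as [<- <-].
  split; [exact He | apply tgt_is_id, He].
Qed.

Lemma mul_right_unit_is_id {a x} : left_cancellative S -> mul a x = Some a -> is_id x.
Proof.
  intros LC Hax; rewrite (LC a x (tgt a) a Hax (mul_tgt_r _ a)).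
  apply src_tgt.
Qed.

Definition not_composable_head x w : Prop :=
  match w with [] => True | y :: _ => tgt x <> src y end.

Fixpoint reduced w : Prop :=
  match w with
  | [] => True
  | x :: w' => ~ is_id x /\ not_composable_head x w' /\ reduced w'
  end.

Lemma not_composable_head_tgt {x} y {w} :
  tgt x = tgt y -> not_composable_head y w -> not_composable_head x w.
Proof. destruct w; simpl; congruence. Qed.

Definition cons_skip_id x w : list S :=
  if excluded_middle_informative (is_id x) then w else x :: w.

Lemma cons_skip_id_id x w : is_id x -> cons_skip_id x w = w.
Proof. unfold cons_skip_id; destruct excluded_middle_informative; tauto. Qed.

Lemma cons_skip_id_nid x w : ~ is_id x -> cons_skip_id x w = x :: w.
Proof. unfold cons_skip_id; destruct excluded_middle_informative; tauto. Qed.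

Lemma reduced_cons_skip_id x w :
  not_composable_head x w -> reduced w -> reduced (cons_skip_id x w).
Proof. unfold cons_skip_id; destruct excluded_middle_informative; simpl; tauto. Qed.

Definition merge_head x w : S * list S :=
  match w with
  | [] => (x, [])
  | y :: w' => match mul x y with Some z => (z, w') | None => (x, w) end
  end.

Definition push x w : list S :=
  let (t, w') := merge_head x w in cons_skip_id t w'.

Definition act u w : list S := fold_right push w u.

Definition nf u : list S := act u [].

Lemma merge_head_src x w : src (fst (merge_head x w)) = src x.
Proof.
  destruct w as [|y w']; simpl; [reflexivity|].
  destruct (mul x y) eqn:E; simpl; [apply (mul_src_tgt _ _ _ E) | reflexivity].
Qed.

Lemma merge_head_not_composable x {w} :
  reduced w -> not_composable_head (fst (merge_head x w)) (snd (merge_head x w)).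
Proof.
  destruct w as [|y w']; simpl; [trivial|]; intros [_ [Hyw _]].
  destruct (mul x y) eqn:E; simpl.
  - exact (not_composable_head_tgt _ (proj2 (mul_src_tgt _ _ _ E)) Hyw).
  - apply mul_None, E.
Qed.

Lemma reduced_snd_merge_head x {w} : reduced w -> reduced (snd (merge_head x w)).
Proof.
  destruct w as [|y w']; simpl; [trivial|].
  destruct (mul x y); simpl; tauto.
Qed.

Lemma push_reduced x w : reduced w -> reduced (push x w).
Proof.
  intros Hw; unfold push.
  pose proof (merge_head_not_composable x Hw) as Hn.
  pose proof (reduced_snd_merge_head x Hw) as Hr.
  destruct (merge_head x w); apply reduced_cons_skip_id; assumption.
Qed.

Lemma act_reduced u w : reduced w -> reduced (act u w).
Proof. induction u; simpl; auto using push_reduced. Qed.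

Lemma nf_reduced u : reduced (nf u).
Proof. apply act_reduced; exact I. Qed.

Lemma push_not_composable {x w} : not_composable_head x w -> push x w = cons_skip_id x w.
Proof.
  destruct w as [|y w']; [reflexivity|]; intros Hxy.
  unfold push; simpl; rewrite (proj2 (mul_None x y) Hxy); reflexivity.
Qed.

Lemma push_id {e w} : is_id e -> reduced w -> push e w = w.
Proof.
  intros He Hw; destruct w as [|y w']; unfold push; simpl.
  - apply cons_skip_id_id, He.
  - destruct (mul e y) eqn:E.
    + rewrite (mul_is_id_l He E); apply cons_skip_id_nid, Hw.
    + apply cons_skip_id_id, He.
Qed.

Lemma push_mul x y z w :
  mul x y = Some z -> reduced w -> push x (push y w) = push z w.
Proof.
  intros Hxy Hw.
  destruct (excluded_middle_informative (is_id y)) as [Hy|Hy].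
  { rewrite (push_id Hy Hw), (mul_is_id_r Hy Hxy); reflexivity. }
  destruct w as [|w1 w'].
  { unfold push at 2; simpl; rewrite cons_skip_id_nid by exact Hy.
    unfold push; simpl; rewrite Hxy; reflexivity. }
  destruct (mul y w1) as [t|] eqn:Hyt.
  - assert (Hzw : mul z w1 = mul x t) by exact (mul_assoc _ _ _ _ Hxy Hyt).
    assert (Hxt : tgt x = src t).
    { rewrite (mul_tgt_src Hxy); symmetry; apply (mul_src_tgt _ _ _ Hyt). }
    unfold push at 2; simpl; rewrite Hyt.
    destruct (excluded_middle_informative (is_id t)) as [Ht|Ht].
    + (* [y w1] is then the identity at [tgt x], so [z w1 = x]. *)
      destruct (mul_is_id_ends Hyt Ht) as [Hsy Htw].
      rewrite cons_skip_id_id by exact Ht.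
      rewrite (mul_tgt_id Ht) in Hzw by (unfold is_id in Ht; congruence).
      rewrite push_not_composable.
      * unfold push; simpl; rewrite Hzw; reflexivity.
      * apply (not_composable_head_tgt w1); [congruence | apply Hw].
    + rewrite cons_skip_id_nid by exact Ht.
      destruct (proj2 (mul_defined _ x t) Hxt) as [r Hr].
      unfold push; simpl; rewrite Hr, Hzw, Hr; reflexivity.
  - assert (Hyw : not_composable_head y (w1 :: w')) by (apply mul_None, Hyt).
    rewrite (push_not_composable Hyw), cons_skip_id_nid by exact Hy.
    rewrite (push_not_composable (x := z)).
    + unfold push; simpl; rewrite Hxy; reflexivity.
    + exact (not_composable_head_tgt _ (proj2 (mul_src_tgt _ _ _ Hxy)) Hyw).
Qed.

Lemma act_app u v w : act (u ++ v) w = act u (act v w).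
Proof. apply fold_right_app. Qed.

Lemma act_umon_eq u v w : umon_eq u v -> reduced w -> act u w = act v w.
Proof.
  intros Huv; revert w; induction Huv; intros w0 Hw0.
  - reflexivity.
  - symmetry; auto.
  - rewrite IHHuv1 by exact Hw0; auto.
  - rewrite !act_app; f_equal.
    apply IHHuv, act_reduced, Hw0.
  - apply push_id; assumption.
  - apply push_mul; assumption.
Qed.

Lemma umon_eq_app u u' v v' : umon_eq u u' -> umon_eq v v' -> umon_eq (u ++ v) (u' ++ v').
Proof.
  intros Hu Hv; apply ue_trans with (u' ++ v).
  - exact (ue_ctx [] v Hu).
  - pose proof (ue_ctx u' [] Hv) as H; rewrite !app_nil_r in H; exact H.
Qed.

Lemma umon_eq_cons_skip_id x w : umon_eq (x :: w) (cons_skip_id x w).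
Proof.
  unfold cons_skip_id; destruct excluded_middle_informative as [Hx|Hx].
  - apply (umon_eq_app [x] [] w w); [apply ue_id, Hx | apply ue_refl].
  - apply ue_refl.
Qed.

Lemma umon_eq_push x w : umon_eq (x :: w) (push x w).
Proof.
  destruct w as [|y w']; unfold push; simpl; [apply umon_eq_cons_skip_id|].
  destruct (mul x y) as [z|] eqn:E; [|apply umon_eq_cons_skip_id].
  apply ue_trans with (z :: w'); [|apply umon_eq_cons_skip_id].
  apply (umon_eq_app [x; y] [z]); [apply ue_mul, E | apply ue_refl].
Qed.

Lemma umon_eq_nf u : umon_eq u (nf u).
Proof.
  induction u as [|x u IH]; [apply ue_refl|].
  apply ue_trans with (x :: nf u); [|apply umon_eq_push].
  apply (umon_eq_app [x] [x]); [apply ue_refl | exact IH].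
Qed.

Lemma umon_eq_iff_nf u v : umon_eq u v <-> nf u = nf v.
Proof.
  split.
  - intros Huv; apply act_umon_eq; [exact Huv | exact I].
  - intros E; apply ue_trans with (nf u); [apply umon_eq_nf|].
    rewrite E; apply ue_sym, umon_eq_nf.
Qed.

Lemma umon_eq_single_inj x y : umon_eq [x] [y] -> src x = src y -> x = y.
Proof.
  rewrite umon_eq_iff_nf; unfold nf, act, push; simpl; unfold cons_skip_id.
  destruct (excluded_middle_informative (is_id x)) as [Hx|Hx],
           (excluded_middle_informative (is_id y)) as [Hy|Hy];
    unfold is_id in *; congruence.
Qed.

Lemma merge_head_eq_of_push_eq {a v w} : reduced v -> reduced w ->
  push a v = push a w -> merge_head a v = merge_head a w.
Proof.
  intros Hv Hw; unfold push.
  pose proof (merge_head_src a v) as Sv; pose proof (merge_head_src a w) as Sw.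
  pose proof (merge_head_not_composable a Hv) as Nv.
  pose proof (merge_head_not_composable a Hw) as Nw.
  destruct (merge_head a v) as [t v'], (merge_head a w) as [r w']; simpl in *.
  unfold cons_skip_id.
  destruct (excluded_middle_informative (is_id t)) as [Ht|Ht],
           (excluded_middle_informative (is_id r)) as [Hr|Hr]; intros E.
  - assert (t = r) by (unfold is_id in *; congruence); congruence.
  - subst v'; exfalso; apply Nv; rewrite tgt_is_id by exact Ht.
    unfold is_id in Ht; congruence.
  - subst w'; exfalso; apply Nw; rewrite tgt_is_id by exact Hr.
    unfold is_id in Hr; congruence.
  - congruence.
Qed.

Lemma merge_head_inj {a v w} : left_cancellative S -> reduced v -> reduced w ->
  merge_head a v = merge_head a w -> v = w.
Proof.
  intros LC Hv Hw.
  assert (Hunit : forall y u, reduced (y :: u) -> mul a y <> Some a)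
    by (intros y u [Hy _] Hay; exact (Hy (mul_right_unit_is_id LC Hay))).
  destruct v as [|v1 v'], w as [|w1 w']; simpl; try reflexivity;
    repeat match goal with |- context [mul a ?y] => destruct (mul a y) eqn:? end;
    intros E; injection E; intros; subst; try discriminate; try reflexivity.
  all: first [ f_equal; eapply LC; eassumption
             | exfalso; apply (Hunit _ _ Hv); assumption
             | exfalso; apply (Hunit _ _ Hw); assumption ].
Qed.

Lemma push_inj {a v w} : left_cancellative S -> reduced v -> reduced w ->
  push a v = push a w -> v = w.
Proof.
  intros LC Hv Hw E.
  exact (merge_head_inj LC Hv Hw (merge_head_eq_of_push_eq Hv Hw E)).
Qed.

Lemma umon_left_cancellative_of_left_cancellative :
  left_cancellative S -> umon_left_cancellative S.
Proof.
  intros LC u; induction u as [|a u IH]; intros v w H; [exact H|].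
  apply IH; rewrite umon_eq_iff_nf in H |- *.
  exact (push_inj LC (nf_reduced _) (nf_reduced _) H).
Qed.

Lemma left_cancellative_of_umon :
  umon_left_cancellative S -> left_cancellative S.
Proof.
  intros UL a x y z Hax Hay.
  apply umon_eq_single_inj.
  - apply (UL [a]); apply ue_trans with [z];
      [apply ue_mul, Hax | apply ue_sym, ue_mul, Hay].
  - rewrite <- (mul_tgt_src Hax); apply (mul_tgt_src Hay).
Qed.

Lemma left_cancellative_iff_umon : left_cancellative S <-> umon_left_cancellative S.
Proof.
  split; [apply umon_left_cancellative_of_left_cancellative | apply left_cancellative_of_umon].
Qed.

Lemma umon_eq_inverse_pair {x y e} : mul x y = Some e -> is_id e -> umon_eq [x; y] [].
Proof. intros Hxy He; apply ue_trans with [e]; [apply ue_mul | apply ue_id]; assumption. Qed.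

Lemma umon_group_of_groupoid : groupoid S -> umon_group S.
Proof.
  intros G u; induction u as [|x u [v [Huv Hvu]]].
  - exists []; split; apply ue_refl.
  - destruct (G x) as [y [e [f [Hxy [He [Hyx Hf]]]]]].
    exists (v ++ [y]); split.
    + replace ((x :: u) ++ v ++ [y]) with ([x] ++ (u ++ v) ++ [y])
        by (simpl; rewrite app_assoc; reflexivity).
      apply ue_trans with ([x] ++ [] ++ [y]); [apply ue_ctx, Huv|].
      exact (umon_eq_inverse_pair Hxy He).
    + replace ((v ++ [y]) ++ x :: u) with (v ++ [y; x] ++ u)
        by (rewrite <- app_assoc; reflexivity).
      apply ue_trans with (v ++ [] ++ u); [apply ue_ctx|exact Hvu].
      exact (umon_eq_inverse_pair Hyx Hf).
Qed.

Lemma right_inverse_of_umon {x v} :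
  umon_eq (x :: v) [] -> exists y e, mul x y = Some e /\ is_id e.
Proof.
  destruct (excluded_middle_informative (is_id x)) as [Hx|Hx].
  { exists x, x; split; [|exact Hx].
    pose proof (mul_src_l _ x) as Hxx; rewrite Hx in Hxx; exact Hxx. }
  rewrite umon_eq_iff_nf; change (push x (nf v) = [] -> exists y e, mul x y = Some e /\ is_id e).
  unfold push; destruct (nf v) as [|y w]; simpl.
  - rewrite cons_skip_id_nid by exact Hx; discriminate.
  - destruct (mul x y) as [e|] eqn:E.
    + unfold cons_skip_id; destruct excluded_middle_informative as [He|He];
        [eauto | discriminate].
    + rewrite cons_skip_id_nid by exact Hx; discriminate.
Qed.

Lemma inverse_unique {x y y' e f} : mul x y = Some e -> is_id e ->
  mul y' x = Some f -> is_id f -> y' = y.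
Proof.
  intros Hxy He Hyx Hf.
  assert (Hye : mul y' e = Some y').
  { apply mul_tgt_id; [exact He|].
    rewrite (mul_tgt_src Hyx); apply (mul_is_id_ends Hxy He). }
  pose proof (mul_assoc _ _ _ _ Hyx Hxy) as Hfy; rewrite Hye in Hfy.
  exact (mul_is_id_l Hf Hfy).
Qed.

Definition opposite : category.
Proof.
  refine (@Category (arr S) (fun x y => mul y x) (@tgt S) (@src S)
            (tgt_tgt S) (src_tgt S) (tgt_src S) (src_src S) _ _ (mul_tgt_r S) (mul_src_l S) _).
  - intros x y; rewrite (mul_defined _ y x); split; auto.
  - intros x y z H; destruct (mul_src_tgt _ _ _ H); auto.
  - intros x y z xy yz Hxy Hyz; symmetry; eapply mul_assoc; eauto.
Defined.

Lemma umon_eq_rev_opposite u v : umon_eq u v -> @umon_eq opposite (rev u) (rev v).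
Proof.
  induction 1; try rewrite !rev_app_distr, <- !app_assoc.
  - apply ue_refl.
  - apply ue_sym; assumption.
  - eapply ue_trans; eassumption.
  - apply (@ue_ctx opposite); assumption.
  - apply (@ue_id opposite), tgt_is_id; assumption.
  - apply (@ue_mul opposite); assumption.
Qed.

Lemma umon_eq_rev_of_opposite u v : @umon_eq opposite u v -> umon_eq (rev u) (rev v).
Proof.
  induction 1; try rewrite !rev_app_distr, <- !app_assoc.
  - apply ue_refl.
  - apply ue_sym; assumption.
  - eapply ue_trans; eassumption.
  - apply (@ue_ctx S); assumption.
  - apply ue_id, is_id_of_tgt; assumption.
  - apply ue_mul; assumption.
Qed.

Lemma umon_right_cancellative_iff_opposite :
  umon_right_cancellative S <-> umon_left_cancellative opposite.
Proof.
  split; intros H u v w E.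
  - apply umon_eq_rev_of_opposite in E; rewrite !rev_app_distr in E.
    apply H, umon_eq_rev_opposite in E; rewrite !rev_involutive in E; exact E.
  - apply umon_eq_rev_opposite in E; rewrite !rev_app_distr in E.
    apply H, umon_eq_rev_of_opposite in E; rewrite !rev_involutive in E; exact E.
Qed.

End Category.

Lemma right_cancellative_iff_umon (S : category) :
  right_cancellative S <-> umon_right_cancellative S.
Proof.
  rewrite umon_right_cancellative_iff_opposite, <- left_cancellative_iff_umon.
  reflexivity.
Qed.

Lemma left_inverse_of_umon {S : category} {x : S} {v} :
  umon_eq (v ++ [x]) [] -> exists y f, mul y x = Some f /\ is_id f.
Proof.
  intros H; apply umon_eq_rev_opposite in H; rewrite rev_app_distr in H.
  destruct (right_inverse_of_umon _ H) as [y [f [Hyx Hf]]].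
  exists y, f; split; [exact Hyx | apply is_id_of_tgt, Hf].
Qed.

Lemma groupoid_of_umon_group (S : category) : umon_group S -> groupoid S.
Proof.
  intros G x; destruct (G [x]) as [v [Hxv Hvx]].
  destruct (right_inverse_of_umon _ Hxv) as [y [e [Hxy He]]].
  destruct (left_inverse_of_umon Hvx) as [y' [f [Hyx Hf]]].
  rewrite (inverse_unique _ Hxy He Hyx Hf) in Hyx.
  exists y, e, f; auto.
Qed.

Theorem corollary4p3 (S : category) :
  (left_cancellative S <-> umon_left_cancellative S) /\
  (right_cancellative S <-> umon_right_cancellative S) /\
  (groupoid S <-> umon_group S).
Proof.
  split; [|split].
  - apply left_cancellative_iff_umon.
  - apply right_cancellative_iff_umon.
  - split; [apply umon_group_of_groupoid | apply groupoid_of_umon_group].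
Qed.
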